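(* Let $F$ be a forest and $t$ a positive constant. Then there exists a (zero,degree)-assignment $\tau'$ for $F$ with $\overline{\tau'}\le t$ and $Ldyn_t(F)=dyn_{\tau'}(F)$.
   Context: A threshold assignment is a function $\tau:V(F)\to\{0,1,2,\dots\}$ with $\tau(v)\le deg_F(v)$ for every $v$; $\overline{\tau}=\sum_v\tau(v)/|V(F)|$. A (zero,degree)-assignment is one with $\tau(v)\in\{0,deg_F(v)\}$ for every vertex $v$. A set $D\subseteq V(F)$ is a $\tau$-dynamo if $V(F)$ can be partitioned into $D_0=D,D_1,\dots,D_k$ such that for each $1\le i\le k$, $D_i$ consists of all vertices not in $D_0\cup\dots\cup D_{i-1}$ having at least $\tau(v)$ neighbors in $D_0\cup\dots\cup D_{i-1}$; $dyn_\tau(F)$ is the minimum size of a $\tau$-dynamo. $Ldyn_t(F)=\max\{dyn_\tau(F):\overline{\tau}\le t\}$. *)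

From HB Require Import structures.
From mathcomp Require Import all_boot all_order all_algebra.
From mathcomp Require Import boolp reals.
Set Implicit Arguments. Unset Strict Implicit. Unset Printing Implicit Defensive.
Import Order.TTheory GRing.Theory Num.Theory.

Section Dyn.
Variable T : finType.
Variable e : rel T.

Definition simple_graph := symmetric e /\ irreflexive e.

Definition has_cycle := exists s : seq T, [&& uniq s, 2 < size s & cycle e s].

Definition forest := simple_graph /\ ~ has_cycle.

Definition deg (v : T) : nat := #|[set u | e v u]|.

Definition threshold_assignment (tau : T -> nat) := forall v, tau v <= deg v.

Definition zero_degree_assignment (tau : T -> nat) :=
  forall v, tau v = 0 \/ tau v = deg v.

Definition avg_tau (R : realType) (tau : T -> nat) : R :=
  ((\sum_v tau v)%N)%:R / (#|T|)%:R.

Definition step (tau : T -> nat) (S : {set T}) : {set T} :=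
  S :|: [set v | (v \notin S) && (tau v <= #|[set u in S | e v u]|)].

(* D is a tau-dynamo: the sets D_0 = D, D_i = step(D_0 u .. u D_{i-1}) \ (D_0 u .. u D_{i-1})
   partition V(F) for some k, i.e. D_0 u ... u D_k = iter k (step tau) D = V(F). *)
Definition dynamo (tau : T -> nat) (D : {set T}) :=
  exists k, iter k (step tau) D = setT.

(* dyn_tau(F): minimum size of a tau-dynamo (setT is always one) *)
Definition dyn (tau : T -> nat) : nat :=
  \big[minn/#|T|]_(D : {set T} | `[< dynamo tau D >]) #|D|.

(* Ldyn_t(F) = max { dyn_tau(F) : tau threshold assignment, avg tau <= t }.
   Since tau(v) <= deg(v) < |V(F)|, every threshold assignment is encoded
   by a finite function T -> 'I_(|V(F)|+1). *)
Definition Ldyn (R : realType) (t : R) : nat :=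
  \max_(tau : {ffun T -> 'I_#|T|.+1} |
          `[< threshold_assignment (fun v => tau v) >] &&
          (avg_tau R (fun v => tau v) <= t)%R)
     dyn (fun v => tau v).

End Dyn.

From HB Require Import structures.
From mathcomp Require Import all_boot all_order all_algebra.
From mathcomp Require Import boolp reals.
From mathcomp Require Import zify.
Import Order.TTheory GRing.Theory Num.Theory.
Set Implicit Arguments. Unset Strict Implicit. Unset Printing Implicit Defensive.

(* Peeling off leaves, any threshold assignment [tau] of a forest yields a
   matching [M] with [dyn_tau <= |M|] such that the sum of the degrees of the
   matched vertices is at most the sum of [tau].  The (zero,degree)-assignment
   that is full exactly on the matched vertices therefore has average at most
   that of [tau], and its dyn is at least [|M|], since a vertex at full
   threshold needs all its neighbours active first, so every dynamo contains an
   endpoint of each matched edge.  Applied to a [tau] attaining [Ldyn_t], this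
   gives the theorem. *)

Section Activation.
Variable T : finType.
Implicit Types (e : rel T) (tau : T -> nat) (S D : {set T}).

Lemma in_step e tau S x :
  (x \in step e tau S) = (x \in S) || (tau x <= #|[set w in S | e x w]|).
Proof. by rewrite !inE; case: (x \in S). Qed.

Lemma subset_step e tau S : S \subset step e tau S.
Proof. by apply/subsetP=> x xS; rewrite in_step xS. Qed.

Lemma dyn_attained e tau : exists2 D, dynamo e tau D & dyn e tau = #|D|.
Proof.
apply: (big_ind (fun m => exists2 D, dynamo e tau D & m = #|D|)).
- by exists setT; [exists 0 | rewrite cardsT].
- move=> _ _ [A dA ->] [B dB ->].
  by case: leqP => _; [exists A | exists B].
- by move=> D /asboolP dD; exists D.
Qed.

Lemma dyn_leq_card e tau D : dynamo e tau D -> dyn e tau <= #|D|.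
Proof.
move=> dD; rewrite /dyn unlock.
have : D \in index_enum {set T} by rewrite mem_index_enum.
elim: (index_enum _) => //= A r IH; rewrite inE => /predU1P [<-|/IH].
  by rewrite asboolT //= geq_minl.
by case: asboolP => //= _; apply: leq_trans (geq_minr _ _).
Qed.

Lemma leq_dyn e tau m : (forall D, dynamo e tau D -> m <= #|D|) -> m <= dyn e tau.
Proof. by move=> lb; have [D /lb] := dyn_attained e tau => + ->. Qed.

Lemma dynamo_simulation e e' tau tau' (P : {set T} -> {set T} -> Prop) D' D :
  (forall S' S, P S' S -> P (step e' tau' S') (step e tau S)) -> P D' D ->
  (forall S, P setT S -> dynamo e tau S) -> dynamo e' tau' D' -> dynamo e tau D.
Proof.
move=> Pstep P0 Pend [k Dk].
have : P (iter k (step e' tau') D') (iter k (step e tau) D).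
  by elim: k {Dk} => //= k IH; apply: Pstep.
by rewrite Dk => /Pend [j Dj]; exists (j + k); rewrite iterD.
Qed.

Lemma dyn_transfer e e' tau tau' c :
  (forall D', dynamo e' tau' D' -> exists2 D, dynamo e tau D & #|D| <= #|D'| + c) ->
  dyn e tau <= dyn e' tau' + c.
Proof.
move=> transfer; have [D' /transfer [D dD le_DD'] ->] := dyn_attained e' tau'.
exact: leq_trans (dyn_leq_card dD) le_DD'.
Qed.

Lemma dyn_leq_of_dynamo e e' tau tau' :
  (forall D, dynamo e' tau' D -> dynamo e tau D) -> dyn e tau <= dyn e' tau'.
Proof.
move=> dD; rewrite -[dyn e' tau']addn0; apply: dyn_transfer => D /dD.
by exists D; rewrite ?addn0.
Qed.

End Activation.

Definition del_edge (T : eqType) (e : rel T) (u v : T) : rel T :=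
  fun x y => e x y && ~~ (((x == u) && (y == v)) || ((x == v) && (y == u))).

Lemma del_edge_sub (T : eqType) (e : rel T) u v x y : del_edge e u v x y -> e x y.
Proof. by case/andP. Qed.

Section EdgeDeletion.
Variables (T : finType) (e : rel T) (u v : T).

Lemma forest_del_edge : forest e -> forest (del_edge e u v).
Proof.
move=> [[sym_e irr_e] acyc]; split; first split.
- move=> x y; rewrite /del_edge sym_e; congr (_ && ~~ _).
  by rewrite orbC; congr (_ || _); rewrite andbC.
- by move=> x; rewrite /del_edge irr_e.
- move=> [s /and3P [us ss cs]]; apply: acyc; exists s.
  by rewrite us ss (sub_cycle (@del_edge_sub _ e u v)).
Qed.

Lemma card_edges_del_edge : e u v ->
  #|[set p : T * T | del_edge e u v p.1 p.2]| < #|[set p : T * T | e p.1 p.2]|.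
Proof.
move=> euv; apply/proper_card/properP; split.
  by apply/subsetP=> p; rewrite !inE; apply: del_edge_sub.
by exists (u, v); rewrite !inE //= /del_edge euv !eqxx.
Qed.

Lemma deg_del_edge x : symmetric e -> e u v -> u != v ->
  deg e x = deg (del_edge e u v) x + ((x == u) || (x == v)).
Proof.
move=> sym_e euv nuv; rewrite /deg.
have [->|nxu] := eqVneq x u.
  rewrite (cardsD1 v [set y | e u y]) inE euv addnC; congr (_ + _).
  by apply: eq_card => y; rewrite !inE /del_edge eqxx /= (negbTE nuv) andbC orbF.
have [->|nxv] := eqVneq x v.
  rewrite (cardsD1 u [set y | e v y]) inE sym_e euv addnC; congr (_ + _).
  rewrite eq_sym in nuv.
  by apply: eq_card => y; rewrite !inE /del_edge eqxx /= (negbTE nuv) andbC.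
rewrite addn0; apply: eq_card => y; rewrite !inE /del_edge.
by rewrite (negbTE nxu) (negbTE nxv) andbT.
Qed.

Lemma sum_deg_del_edge (s : seq T) : symmetric e -> e u v -> u != v ->
  uniq s -> v \notin s ->
  \sum_(x <- s) deg e x <= \sum_(x <- s) deg (del_edge e u v) x + (u \in s).
Proof.
move=> sym_e euv nuv; elim: s => [|x s IH]; first by rewrite !big_nil.
rewrite !big_cons /= inE => /andP [xs us]; rewrite inE negb_or => /andP [nvx vs].
have := IH us vs; rewrite (deg_del_edge x sym_e euv nuv) (eq_sym x v) (negbTE nvx).
have [<-|_] := eqVneq x u; first by rewrite (negbTE xs) /=; lia.
by rewrite /=; lia.
Qed.

End EdgeDeletion.

Section Leaves.
Variables (T : finType) (e : rel T).

Lemma chord_has_cycle x y r w : symmetric e -> uniq [:: x, y & r] ->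
  path e x (y :: r) -> w \in r -> e x w -> has_cycle e.
Proof.
move=> sym_e + + wr exw; case/splitPr: wr => r1 r2 uxyr pxyr.
exists [:: x, y & rcons r1 w]; apply/and3P; split.
- by move: uxyr; rewrite -cat_cons -cat_rcons -cat_cons cat_uniq => /and3P [].
- by rewrite /= size_rcons.
- rewrite /= rcons_path last_rcons (sym_e w x) exw andbT.
  by move: pxyr; rewrite /= -cat_rcons cat_path => /and3P [-> ->].
Qed.

(* The first vertex of a longest path in a forest is a leaf. *)
Lemma forest_leaf a b : forest e -> e a b ->
  exists v u, e v u /\ (forall w, e v w -> w = u).
Proof.
move=> [[sym_e irr_e] acyc] eab.
pose P n := `[< exists s : seq T, [/\ uniq s, sorted e s & size s = n] >].
have P2 : P 2.
  apply/asboolP; exists [:: a; b]; rewrite /= eab inE andbT; split => //.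
  by apply: contraTN eab => /eqP ->; rewrite irr_e.
have ubP i : P i -> i <= #|T|.
  by move=> /asboolP [s [us _ <-]]; rewrite -(card_uniqP us) max_card.
have [n /asboolP [s [us ss sn]] longest] := ex_maxnP (ex_intro _ 2 P2) ubP.
have := longest _ P2; rewrite -sn.
case: s us ss sn => [|x [|y r]] // us ss sn _.
exists x, y; split => [|w exw]; first by case/andP: ss.
have [wxyr|wNxyr] := boolP (w \in [:: x, y & r]).
  rewrite !inE in wxyr; case/or3P: wxyr => [/eqP wx|/eqP //|wr].
    by rewrite wx irr_e in exw.
  by case: acyc; apply: chord_has_cycle sym_e us ss wr exw.
have /longest : P (size [:: w, x, y & r]).
  by apply/asboolP; exists [:: w, x, y & r]; rewrite /= sym_e exw wNxyr.
by rewrite -sn ltnn.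
Qed.

End Leaves.

Section DeletionTransfer.
Variables (T : finType) (e : rel T) (u v : T).
Hypotheses (sym_e : symmetric e) (euv : e u v).
Let e' := del_edge e u v.

Lemma subset_nbrs_del_edge (S' S : {set T}) x :
  S' \subset S -> [set w in S' | e' x w] \subset [set w in S | e x w].
Proof.
move=> sub; apply/subsetP=> w; rewrite !inE => /andP [wS /del_edge_sub ->].
by rewrite (subsetP sub).
Qed.

Lemma card_nbrs_del_edge (S' S : {set T}) :
  S' \subset S -> v \in S -> #|[set w in S' | e' u w]| < #|[set w in S | e u w]|.
Proof.
move=> sub vS; rewrite (cardsD1 v [set w in S | e u w]) !inE vS euv ltnS.
apply/subset_leq_card/subsetP=> w; rewrite !inE => /andP [wS /andP [-> h]].
rewrite (subsetP sub _ wS) !andbT; apply: contraNN h => /eqP ->.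
by rewrite !eqxx.
Qed.

(* Once [v] is active, [u] sees one active neighbour more in [e] than in [e'],
   which pays for the extra unit of threshold at [u]. *)
Lemma dynamo_del_edge_zero tau tau' D : tau v = 0 ->
  (forall x, x != u -> tau' x = tau x) -> tau u <= tau' u + 1 ->
  dynamo e' tau' D -> dynamo e tau D.
Proof.
move=> tv tau'E tu dD.
suff [k Dk] : dynamo e tau (step e tau D) by exists k.+1; rewrite iterSr.
apply: (@dynamo_simulation _ e e' tau tau' (fun S' S => S' \subset S /\ v \in S) D) => //.
- move=> S' S [sub vS]; split; last exact: subsetP (subset_step _ _ _) _ vS.
  apply/subsetP=> x; rewrite in_step => /orP [xS'|hx].
    by rewrite (subsetP (subset_step _ _ _)) // (subsetP sub).
  rewrite in_step; apply/orP; right.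
  have [xu|nxu] := eqVneq x u.
    rewrite xu in hx *; apply: leq_trans tu _; rewrite addn1.
    exact: leq_ltn_trans hx (card_nbrs_del_edge sub vS).
  by rewrite -tau'E //; apply: leq_trans hx (subset_leq_card (subset_nbrs_del_edge _ sub)).
- by split; [exact: subset_step | rewrite in_step tv orbT].
- by move=> S [sub _]; exists 0; apply/eqP; rewrite eqEsubset subsetT sub.
Qed.

Hypotheses (nuv : u != v) (leaf_v : forall w, e v w -> w = u).

Lemma subset_nbrs_del_leaf_edge (S' S : {set T}) x :
  S' :\ v \subset S -> [set w in S' | e' x w] \subset [set w in S | e x w].
Proof.
move=> sub; apply/subsetP=> w; rewrite !inE => /andP [wS e'xw].
have exw := del_edge_sub e'xw; rewrite exw andbT.
have [wv|nwv] := eqVneq w v; last by apply: (subsetP sub); rewrite !inE nwv.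
rewrite wv sym_e in exw; move: e'xw.
by rewrite wv (leaf_v exw) /e' /del_edge !eqxx andbF.
Qed.

(* A leaf of threshold at most one is activated as soon as its neighbour is. *)
Lemma dynamo_del_leaf_edge tau tau' (D' D : {set T}) : tau v <= 1 ->
  (forall x, x != v -> x != u -> tau' x = tau x) -> tau u <= tau' u \/ u \in D ->
  D' \subset D -> dynamo e' tau' D' -> dynamo e tau D.
Proof.
move=> tv tau'E hu sub.
apply: (@dynamo_simulation _ e e' tau tau'
   (fun S' S => S' :\ v \subset S /\ (tau u <= tau' u \/ u \in S))).
- move=> S' S [subS hS]; split; last first.
    by case: hS => [|uS]; [left | right; rewrite (subsetP (subset_step _ _ _))].
  apply/subsetP=> x; rewrite in_setD1 => /andP [nxv]; rewrite in_step.
  case/orP => [xS'|hx].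
    by rewrite (subsetP (subset_step _ _ _)) // (subsetP subS) // !inE nxv.
  rewrite in_step; apply/orP.
  have hc := subset_leq_card (subset_nbrs_del_leaf_edge x subS).
  have [xu|nxu] := eqVneq x u; last by right; rewrite -tau'E //; apply: leq_trans hc.
  rewrite xu in hx hc *.
  by case: hS => [h|]; [right; apply: leq_trans h (leq_trans hx hc) | left].
- by split=> //; apply: subset_trans sub; apply: subsetDl.
- move=> S [subS _]; exists 1; apply/eqP; rewrite eqEsubset subsetT /=.
  apply/subsetP=> x _; rewrite in_step.
  have [->|nxv] := eqVneq x v; last by rewrite (subsetP subS) // !inE nxv.
  apply/orP; right; apply: leq_trans tv _.
  rewrite card_gt0; apply/set0Pn; exists u; rewrite !inE sym_e euv andbT.
  by apply: (subsetP subS); rewrite !inE nuv.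
Qed.

End DeletionTransfer.

Definition endpoints (T : Type) (M : seq (T * T)) : seq T :=
  flatten [seq [:: p.1; p.2] | p <- M].

Lemma mem_endpoints (T : eqType) (M : seq (T * T)) x :
  reflect (exists2 p, p \in M & (x == p.1) || (x == p.2)) (x \in endpoints M).
Proof.
apply: (iffP flatten_mapP) => [[p pM]|[p pM xp]]; last by exists p; rewrite // !inE.
by rewrite !inE; exists p.
Qed.

(* Invariant of the leaf induction: putting full-degree thresholds on the
   endpoints of the matching [M] stays within the budget of [tau], and [M] is
   already as large as [dyn e tau]. *)
Definition budget_matching (T : finType) (e : rel T) (tau : T -> nat) M :=
  [/\ all (fun p => e p.1 p.2) M, uniq (endpoints M),
      all (fun x => 0 < tau x) (endpoints M),
      \sum_(x <- endpoints M) deg e x <= \sum_v tau v & dyn e tau <= size M].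

Lemma sum_agree_off (T : finType) (f g : T -> nat) (s : seq T) : uniq s ->
  (forall x, x \notin s -> f x = g x) ->
  \sum_x f x + \sum_(x <- s) g x = \sum_x g x + \sum_(x <- s) f x.
Proof.
move=> us fg.
have split h : \sum_x h x = \sum_(x | x \notin s) h x + \sum_(x <- s) h x.
  by rewrite (big_uniq _ us) [LHS](bigID (mem s)) addnC.
by rewrite !split (eq_bigr _ fg) addnAC.
Qed.

Section LeafInduction.
Variables (T : finType) (e : rel T) (u v : T).
Hypotheses (sym_e : symmetric e) (euv : e u v) (nuv : u != v)
  (leaf_v : forall w, e v w -> w = u).
Let e' := del_edge e u v.
Let deg_e x : deg e x = deg e' x + ((x == u) || (x == v)) :=
  deg_del_edge x sym_e euv nuv.

Lemma deg_leaf : deg e v = 1.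
Proof.
rewrite /deg -(cards1 u); apply: eq_card => w; rewrite !inE.
by apply/idP/eqP => [/leaf_v //|->]; rewrite sym_e.
Qed.

Lemma budget_matching_del_edge tau tau' M :
  budget_matching e' tau' M -> v \notin endpoints M ->
  (forall x, 0 < tau' x -> 0 < tau x) ->
  \sum_x tau' x + (u \in endpoints M) <= \sum_x tau x ->
  dyn e tau <= dyn e' tau' -> budget_matching e tau M.
Proof.
move=> [edgesM uM posM sumM dynM] vM pos_tau sum_tau dyn_tau; split => //.
- by apply/allP => p /(allP edgesM) /del_edge_sub.
- by apply/allP => x /(allP posM) /pos_tau.
- have := @sum_deg_del_edge _ e u v _ sym_e euv nuv uM vM; rewrite -/e'; lia.
- exact: leq_trans dyn_tau dynM.
Qed.

Lemma budget_matching_cons_del_edge tau tau' M :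
  budget_matching e' tau' M -> u \notin endpoints M -> v \notin endpoints M ->
  0 < tau u -> 0 < tau v -> (forall x, 0 < tau' x -> 0 < tau x) ->
  \sum_x tau' x + deg e u + 1 <= \sum_x tau x ->
  dyn e tau <= dyn e' tau' + 1 -> budget_matching e tau ((u, v) :: M).
Proof.
move=> [edgesM uM posM sumM dynM] uNM vNM tu tv pos_tau sum_tau dyn_tau.
rewrite /budget_matching /endpoints /= -/(endpoints M) !inE negb_or nuv uNM vNM.
split => //; rewrite ?euv ?tu ?tv //=.
- by apply/allP => p /(allP edgesM) /del_edge_sub.
- by apply/allP => x /(allP posM) /pos_tau.
- have := @sum_deg_del_edge _ e u v _ sym_e euv nuv uM vNM.
  by rewrite -/e' !big_cons deg_leaf (negbTE uNM) /=; lia.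
- by apply: leq_trans dyn_tau _; rewrite addn1 ltnS.
Qed.

Section Step.
Variable tau : T -> nat.
Hypothesis tau_ok : threshold_assignment e tau.
Hypothesis IH : forall tau', threshold_assignment e' tau' ->
  exists M, budget_matching e' tau' M.

(* The leaf is active from the start: transfer one unit of threshold from [u]. *)
Lemma budget_matching_leaf_free : tau v = 0 -> exists M, budget_matching e tau M.
Proof.
move=> tv.
pose tau' x := if x == u then (tau u).-1 else tau x.
have tau'E x : x != u -> tau' x = tau x by rewrite /tau' => /negbTE ->.
have tau'u : tau' u = (tau u).-1 by rewrite /tau' eqxx.
have tau'_ok : threshold_assignment e' tau'.
  move=> x; have := tau_ok x; rewrite deg_e.
  have [->|nxu] := eqVneq x u; first by rewrite tau'u; lia.
  by rewrite tau'E //; have [->|_] := eqVneq x v; [rewrite tv | rewrite addn0].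
have [M bM] := IH tau'_ok; have [_ _ posM _ _] := bM.
have vNM : v \notin endpoints M.
  by apply/negP => /(allP posM); rewrite tau'E ?tv // eq_sym.
exists M; apply: (budget_matching_del_edge bM vNM).
- by move=> x; have [->|/tau'E ->] := eqVneq x u; rewrite ?tau'u; lia.
- have agree : \sum_x tau' x + tau u = \sum_x tau x + tau' u.
    have := @sum_agree_off _ tau' tau [:: u] isT; rewrite !big_seq1.
    by apply=> x; rewrite inE; apply: tau'E.
  by case: (boolP (u \in endpoints M)) => [/(allP posM)|_] /=; lia.
- apply: dyn_leq_of_dynamo => D; apply: dynamo_del_edge_zero => //.
  by rewrite tau'u; lia.
Qed.

Lemma budget_matching_leaf_unsaturated : 0 < tau v -> tau u < deg e u ->
  exists M, budget_matching e tau M.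
Proof.
move=> tv tu.
pose tau' x := if x == v then 0 else tau x.
have tau'E x : x != v -> tau' x = tau x by rewrite /tau' => /negbTE ->.
have tau'v : tau' v = 0 by rewrite /tau' eqxx.
have tau'_ok : threshold_assignment e' tau'.
  move=> x; have [->|nxv] := eqVneq x v; first by rewrite tau'v.
  rewrite tau'E //; have := tau_ok x; rewrite deg_e (negbTE nxv) orbF.
  by have [xu|_] := eqVneq x u; [move: tu; rewrite xu deg_e eqxx; lia | rewrite addn0].
have [M bM] := IH tau'_ok; have [_ _ posM _ _] := bM.
have vNM : v \notin endpoints M by apply/negP => /(allP posM); rewrite tau'v.
exists M; apply: (budget_matching_del_edge bM vNM).
- by move=> x; have [->|/tau'E ->] := eqVneq x v; rewrite ?tau'v.
- have agree : \sum_x tau' x + tau v = \sum_x tau x + tau' v.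
    have := @sum_agree_off _ tau' tau [:: v] isT; rewrite !big_seq1.
    by apply=> x; rewrite inE; apply: tau'E.
  rewrite tau'v addn0 in agree; rewrite -agree leq_add2l.
  exact: leq_trans (leq_b1 _) tv.
- apply: dyn_leq_of_dynamo => D; apply: dynamo_del_leaf_edge => //.
  + by rewrite -deg_leaf tau_ok.
  + by move=> x /tau'E.
  + by left; rewrite tau'E.
Qed.

(* The edge [uv] joins the matching: both its ends are at full threshold. *)
Lemma budget_matching_leaf_saturated : 0 < tau v -> tau u = deg e u ->
  exists M, budget_matching e tau M.
Proof.
move=> tv tu.
pose tau' x := if (x == u) || (x == v) then 0 else tau x.
have tau'E x : x \notin [:: u; v] -> tau' x = tau x.
  by rewrite !inE /tau' => /negbTE ->.
have tau'uv x : (x == u) || (x == v) -> tau' x = 0 by rewrite /tau' => ->.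
have tau'_ok : threshold_assignment e' tau'.
  move=> x; have [uvx|nuvx] := boolP ((x == u) || (x == v)); first by rewrite tau'uv.
  by rewrite tau'E ?inE //; have := tau_ok x; rewrite deg_e (negbTE nuvx) addn0.
have [M bM] := IH tau'_ok; have [_ _ posM _ _] := bM.
have notinM x : (x == u) || (x == v) -> x \notin endpoints M.
  by move=> uvx; apply/negP => /(allP posM); rewrite tau'uv.
exists ((u, v) :: M); apply: (budget_matching_cons_del_edge bM).
- by apply: notinM; rewrite eqxx.
- by apply: notinM; rewrite eqxx orbT.
- by rewrite tu /deg card_gt0; apply/set0Pn; exists v; rewrite inE.
- exact: tv.
- move=> x; have [uvx|nuvx] := boolP ((x == u) || (x == v)); first by rewrite tau'uv.
  by rewrite tau'E // !inE.
- have := @sum_agree_off _ tau' tau [:: u; v]; rewrite /= inE nuv !big_cons !big_nil.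
  rewrite !tau'uv ?eqxx ?orbT // -tu => /(_ isT tau'E).
  by have := tau_ok v; rewrite deg_leaf; lia.
- apply: dyn_transfer => D dD; exists (u |: D); last first.
    by rewrite cardsU1 addnC leq_add2l leq_b1.
  apply: dynamo_del_leaf_edge dD => //.
  + by rewrite -deg_leaf tau_ok.
  + by move=> x nxv nxu; rewrite tau'E // !inE negb_or nxu.
  + by right; rewrite setU11.
  + exact: subsetUr.
Qed.

Lemma budget_matching_leaf : exists M, budget_matching e tau M.
Proof.
have [tv0|tv] := posnP (tau v); first exact: budget_matching_leaf_free.
have [tu|tu] := ltnP (tau u) (deg e u); first exact: budget_matching_leaf_unsaturated.
by apply: budget_matching_leaf_saturated => //; apply/eqP; rewrite eqn_leq tu tau_ok.
Qed.

End Step.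
End LeafInduction.

Lemma budget_matching_nil (T : finType) (e : rel T) tau :
  (forall x y, ~~ e x y) -> threshold_assignment e tau -> budget_matching e tau [::].
Proof.
move=> no_edge tau_ok.
have tau0 x : tau x = 0.
  apply/eqP; rewrite -leqn0; apply: leq_trans (tau_ok x) _.
  by rewrite leqn0 cards_eq0; apply/eqP/setP=> y; rewrite !inE (negbTE (no_edge x y)).
split; rewrite /endpoints ?big_nil //=; rewrite -(cards0 T); apply: dyn_leq_card.
by exists 1; apply/setP=> x; rewrite in_step tau0 !inE.
Qed.

Lemma forest_budget_matching (T : finType) (e : rel T) tau :
  forest e -> threshold_assignment e tau -> exists M, budget_matching e tau M.
Proof.
have [n] := ubnP #|[set p : T * T | e p.1 p.2]|.
elim: n => // n IHn in e tau *; rewrite ltnS => edges_n forest_e tau_ok.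
have [/existsP [[a b] /= eab]|no_edge] := boolP [exists p : T * T, e p.1 p.2]; last first.
  by exists [::]; apply: budget_matching_nil tau_ok => x y; apply: (existsPn no_edge (x, y)).
have [v [u [evu leaf_v]]] := forest_leaf forest_e eab.
have [[sym_e irr_e] _] := forest_e.
have euv : e u v by rewrite sym_e.
have nuv : u != v by apply: contraTneq euv => ->; rewrite irr_e.
apply: (budget_matching_leaf sym_e euv nuv leaf_v tau_ok) => tau' tau'_ok.
apply: IHn tau'_ok; last exact: forest_del_edge.
exact: leq_trans (card_edges_del_edge euv) edges_n.
Qed.

Section MatchingAssignment.
Variables (T : finType) (e : rel T).

Lemma notin_step_full tau (S : {set T}) x y : tau x = deg e x -> e x y ->
  x \notin S -> y \notin S -> x \notin step e tau S.
Proof.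
move=> tx exy xS yS; rewrite in_step (negbTE xS) tx -ltnNge.
apply/proper_card/properP; split; first by apply/subsetP=> w; rewrite !inE => /andP [].
by exists y; rewrite !inE ?exy // (negbTE yS).
Qed.

Lemma dynamo_meets_full_edge tau (D : {set T}) x y : symmetric e ->
  tau x = deg e x -> tau y = deg e y -> e x y ->
  dynamo e tau D -> (x \in D) || (y \in D).
Proof.
move=> sym_e tx ty exy [k Dk]; apply: contraT; rewrite negb_or => /andP [xD yD].
suff /andP [] : (x \notin iter k (step e tau) D) && (y \notin iter k (step e tau) D).
  by rewrite Dk inE.
elim: k {Dk} => [|k /andP [xS yS]] /=; first by rewrite xD yD.
by rewrite !(notin_step_full _ _ xS yS, notin_step_full _ _ yS xS) // sym_e.
Qed.

Lemma size_matching_leq_cover (M : seq (T * T)) (D : {set T}) : uniq (endpoints M) ->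
  (forall p, p \in M -> (p.1 \in D) || (p.2 \in D)) -> size M <= #|D|.
Proof.
elim: M D => [|[x y] M IH] D //=.
rewrite /endpoints /= -/(endpoints M) !inE negb_or => /and3P [/andP [_ xM] yM uM] cover.
have [z zD zxy] : exists2 z, z \in D & (z == x) || (z == y).
  by case/orP: (cover (x, y) (mem_head _ _)) => /= ?; [exists x | exists y];
    rewrite ?eqxx ?orbT.
rewrite (cardsD1 z) zD ltnS IH // => p pM; rewrite !inE.
have zp q : q \in endpoints M -> q != z.
  move=> qM; apply/eqP => qz; move: zxy; rewrite -qz.
  by case/orP => /eqP qxy; [move: xM | move: yM]; rewrite -qxy qM.
have /orP [p1D|p2D] : (p.1 \in D) || (p.2 \in D) by rewrite cover // inE pM orbT.
  by rewrite (zp p.1) ?p1D //; apply/mem_endpoints; exists p; rewrite ?eqxx.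
by rewrite (zp p.2) ?p2D ?orbT //; apply/mem_endpoints; exists p; rewrite ?eqxx ?orbT.
Qed.

Definition matching_assignment (M : seq (T * T)) (x : T) : nat :=
  if x \in endpoints M then deg e x else 0.

Lemma matching_assignment_threshold M : threshold_assignment e (matching_assignment M).
Proof. by move=> x; rewrite /matching_assignment; case: ifP. Qed.

Lemma matching_assignment_zero_degree M :
  zero_degree_assignment e (matching_assignment M).
Proof. by move=> x; rewrite /matching_assignment; case: ifP; [right | left]. Qed.

Lemma sum_matching_assignment M : uniq (endpoints M) ->
  \sum_x matching_assignment M x = \sum_(x <- endpoints M) deg e x.
Proof. by move=> uM; rewrite (big_uniq _ uM) [RHS]big_mkcond. Qed.

Lemma size_leq_dyn_matching M : symmetric e -> all (fun p => e p.1 p.2) M ->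
  uniq (endpoints M) -> size M <= dyn e (matching_assignment M).
Proof.
move=> sym_e edgesM uM; apply: leq_dyn => D dD.
apply: size_matching_leq_cover => // p pM.
have full z : (z == p.1) || (z == p.2) -> matching_assignment M z = deg e z.
  by move=> zp; rewrite /matching_assignment ifT //; apply/mem_endpoints; exists p.
by apply: dynamo_meets_full_edge dD; rewrite // ?full ?eqxx ?orbT // (allP edgesM).
Qed.

End MatchingAssignment.

Section Ldyn.
Variables (R : realType) (T : finType) (e : rel T) (t : R).

Lemma leq_avg_tau (tau tau' : T -> nat) :
  \sum_x tau x <= \sum_x tau' x -> (avg_tau R tau <= avg_tau R tau')%R.
Proof.
move=> le_sum; apply: ler_wpM2r; first by rewrite invr_ge0 ler0n.
by rewrite ler_nat.
Qed.

Lemma dyn_leq_Ldyn tau : threshold_assignment e tau -> (avg_tau R tau <= t)%R ->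
  dyn e tau <= Ldyn e t.
Proof.
move=> tau_ok avg_t; pose f : {ffun T -> 'I_#|T|.+1} := [ffun x => inord (tau x)].
have fE : (fun x => f x : nat) = tau.
  by apply: funext => x; rewrite ffunE inordK // ltnS (leq_trans (tau_ok x)) ?max_card.
have := @leq_bigmax_cond _
  (fun g : {ffun T -> 'I_#|T|.+1} =>
     `[< threshold_assignment e (fun x => g x) >] && (avg_tau R (fun x => g x) <= t)%R)
  (fun g => dyn e (fun x => g x)) f.
by rewrite fE avg_t andbT asboolT //; apply.
Qed.

Lemma Ldyn_attained : (0 <= t)%R -> exists tau,
  [/\ threshold_assignment e tau, (avg_tau R tau <= t)%R & Ldyn e t = dyn e tau].
Proof.
move=> t_ge0.
pose A := [pred f : {ffun T -> 'I_#|T|.+1} |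
  `[< threshold_assignment e (fun x => f x) >] && (avg_tau R (fun x => f x) <= t)%R].
have A_gt0 : 0 < #|A|.
  apply/card_gt0P; exists [ffun=> ord0]; rewrite inE /avg_tau big1 => [|x _].
    by rewrite mul0r t_ge0 andbT; apply/asboolP => x; rewrite ffunE.
  by rewrite ffunE.
have [f] := @eq_bigmax_cond _ A (fun f => dyn e (fun x => f x)) A_gt0.
rewrite inE => /andP [/asboolP f_ok avg_f] Ldyn_f.
by exists (fun x => f x : nat); split.
Qed.

End Ldyn.

Theorem theorem2 (R : realType) (T : finType) (e : rel T) (t : R) :
  forest e -> (0 < t)%R ->
  exists tau' : T -> nat,
    [/\ threshold_assignment e tau', zero_degree_assignment e tau',
        (avg_tau R tau' <= t)%R & Ldyn e t = dyn e tau'].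
Proof.
move=> forest_e t_gt0.
have [tau [tau_ok avg_t Ldyn_tau]] := Ldyn_attained e (ltW t_gt0).
have [M [edgesM uM _ sumM dynM]] := forest_budget_matching forest_e tau_ok.
have avg_M : (avg_tau R (matching_assignment e M) <= t)%R.
  by apply: le_trans avg_t; apply: leq_avg_tau; rewrite sum_matching_assignment.
exists (matching_assignment e M); split => //.
- exact: matching_assignment_threshold.
- exact: matching_assignment_zero_degree.
apply/eqP; rewrite eqn_leq (dyn_leq_Ldyn (matching_assignment_threshold e M) avg_M) andbT.
by rewrite Ldyn_tau (leq_trans dynM) ?size_leq_dyn_matching //; case: forest_e => [[]].
Qed.
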